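(* Let $A_X,A_Z,B_X,B_Z\subseteq\mathbb{F}_q^n$ be linear codes with $A_X^\perp\subseteq A_Z$ and $B_X^\perp\subseteq B_Z$ (so that $\mathrm{CSS}(A_X,A_Z)$ and $\mathrm{CSS}(B_X,B_Z)$ are CSS codes). Define \[ C_X=(A_X\cap B_X)+B_Z^\perp,\qquad C_Z=(A_Z\cap B_Z)+B_X^\perp . \] Then \[ C_X^\perp=(A_X^\perp\cap B_Z)+B_X^\perp,\qquad C_Z^\perp=(A_Z^\perp\cap B_X)+B_Z^\perp, \] and $C_X^\perp\subseteq C_Z$, so that $\mathrm{CSS}(C_X,C_Z)$ is a well-defined CSS code.
   Context: $q$ is a prime power. For $C\subseteq\mathbb{F}_q^n$ linear, $C^\perp=\{y\in\mathbb{F}_q^n: \sum_i y_ic_i=0\ \forall c\in C\}$. For linear codes $C_X,C_Z$ with $C_X^\perp\subseteq C_Z$, $\mathrm{CSS}(C_X,C_Z)=\mathrm{span}\{\sum_{y\in C_X^\perp}|x+y\rangle: x\in C_Z\}\subseteq(\mathbb{C}^q)^{\otimes n}$. *)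

(* Linear codes in F_q^n are subspaces ({vspace 'rV[F]_n})
   of the row space 'rV[F]_n over a finite field F (q = #|F|). *)
From HB Require Import structures.
From mathcomp Require Import all_boot all_order all_algebra.
Set Implicit Arguments. Unset Strict Implicit. Unset Printing Implicit Defensive.
Import GRing.Theory.
Local Open Scope ring_scope.

Definition dotv (F : finFieldType) (n : nat) (y c : 'rV[F]_n) : F :=
  \sum_(i < n) y ord0 i * c ord0 i.

(* C^perp = { y | forall c in C, sum_i y_i c_i = 0 }, as a subspace
   (the span of this set, which is the set itself). *)
Definition dual (F : finFieldType) (n : nat) (C : {vspace 'rV[F]_n})
  : {vspace 'rV[F]_n} :=
  <<enum [set y : 'rV[F]_n | [forall c : 'rV[F]_n, (c \in C) ==> (dotv y c == 0%R)]]>>%VS.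

From mathcomp Require Import all_boot all_order all_algebra.
Set Implicit Arguments. Unset Strict Implicit. Unset Printing Implicit Defensive.
Import GRing.Theory.
Local Open Scope ring_scope.

(* Orthogonality is an inclusion-reversing involution on the subspaces of
   F^n (rank-nullity gives dim C^perp = n - dim C) that turns sums into
   intersections and back.  Hence C_X^perp = (A_X^perp + B_X^perp) :&: B_Z,
   and since B_X^perp <= B_Z the modular law rewrites this as
   (A_X^perp :&: B_Z) + B_X^perp; C_Z^perp is the same computation with the
   roles of X and Z exchanged, and the inclusion follows from A_X^perp <= A_Z. *)

Lemma kermx_trK (F : fieldType) m n (A : 'M[F]_(m, n)) :
  (kermx (kermx A^T)^T == A)%MS.
Proof.
have sAK : (A <= kermx (kermx A^T)^T)%MS.
  apply/sub_kermxP; apply: trmx_inj.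
  by rewrite trmx_mul trmxK mulmx_ker trmx0.
rewrite sAK andbT -(mxrank_leqif_sup sAK).2.
by rewrite !(mxrank_ker, mxrank_tr) subKn ?rank_leq_col.
Qed.

Section CodeDuality.
Variables (F : finFieldType) (n : nat).
Implicit Types (U V W : {vspace 'rV[F]_n}) (y c : 'rV[F]_n).

Lemma dotvE y c : dotv y c = (y *m c^T) 0 0.
Proof. by rewrite [RHS]mxE; apply: eq_bigr => k _; rewrite mxE. Qed.

Lemma dotv_rowsP m (K : 'M[F]_(m, n)) y :
  reflect (forall c, (c <= K)%MS -> dotv y c = 0) (y <= kermx K^T)%MS.
Proof.
apply: (iffP sub_kermxP) => [yK0 c /submxP[D ->] | yK0].
  by rewrite dotvE trmx_mul mulmxA yK0 mul0mx mxE.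
apply/rowP => j; rewrite !mxE -[RHS](yK0 _ (row_sub j K)).
by apply: eq_bigr => k _; rewrite !mxE.
Qed.

Definition code_mx U : 'M[F]_(#|{: 'rV[F]_n}|, n) :=
  \matrix_i (if enum_val i \in U then enum_val i else 0).

Lemma mem_code_mx U y : (y \in U) = (y <= code_mx U)%MS.
Proof.
apply/idP/idP => [yU | /submxP[D ->]].
  by apply/(eq_row_sub (enum_rank y)); rewrite rowK enum_rankK yU.
rewrite mulmx_sum_row; apply: memv_suml => i _; apply: memvZ.
by rewrite rowK; case: ifP; rewrite ?mem0v.
Qed.

Lemma mem_dual U y : (y \in dual U) = (y <= kermx (code_mx U)^T)%MS.
Proof.
rewrite /dual; set S := [set x | _].
have S_ker x : (x \in S) = (x <= kermx (code_mx U)^T)%MS.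
  rewrite inE; apply/forall_inP/dotv_rowsP => [xU c | xU c cU].
    by rewrite -mem_code_mx => /xU/eqP.
  by apply/eqP/xU; rewrite -mem_code_mx.
apply/idP/idP => [| yK]; last by apply: memv_span; rewrite mem_enum S_ker.
move/(coord_span (X := in_tuple (enum S))) ->.
apply: summx_sub => i _; apply: scalemx_sub.
by rewrite -S_ker -mem_enum mem_nth.
Qed.

Lemma dualP U y :
  reflect (forall c, c \in U -> dotv y c = 0) (y \in dual U).
Proof.
rewrite mem_dual; apply: (iffP (dotv_rowsP _ _)) => yU c.
  by rewrite mem_code_mx => /yU.
by rewrite -mem_code_mx => /yU.
Qed.

Lemma dualS U V : (U <= V)%VS -> (dual V <= dual U)%VS.
Proof.
move/subvP => sUV; apply/subvP => y /dualP yV.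
by apply/dualP => c /sUV /yV.
Qed.

Lemma dualK U : dual (dual U) = U.
Proof.
have /rV_eqP kerK := kermx_trK (code_mx U).
apply/vspaceP => y; rewrite [RHS]mem_code_mx -kerK.
apply/dualP/dotv_rowsP => yU c cU; by apply: yU; move: cU; rewrite mem_dual.
Qed.

Lemma dual_add U V : dual (U + V) = (dual U :&: dual V)%VS.
Proof.
apply/eqP; rewrite eqEsubv subv_cap !dualS ?addvSl ?addvSr //=.
apply/subvP => y; rewrite memv_cap => /andP[/dualP yU /dualP yV].
apply/dualP => _ /memv_addP[u uU [v vV ->]].
by rewrite !dotvE linearD mulmxDr mxE -!dotvE yU ?yV ?addr0.
Qed.

Lemma dual_cap U V : dual (U :&: V) = (dual U + dual V)%VS.
Proof. by rewrite -[U]dualK -[V]dualK -dual_add !dualK. Qed.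

Lemma dual_cap_add_dual U V W :
  (dual V <= W)%VS -> dual ((U :&: V) + dual W) = ((dual U :&: W) + dual V)%VS.
Proof.
move=> sdVW; rewrite dual_add dualK dual_cap capvC [in RHS]capvC.
by rewrite vspace_modr.
Qed.

End CodeDuality.

Theorem lemma5p4 (F : finFieldType) (n : nat)
  (AX AZ BX BZ : {vspace 'rV[F]_n})
  (hA : (dual AX <= AZ)%VS) (hB : (dual BX <= BZ)%VS) :
  let CX := ((AX :&: BX) + dual BZ)%VS in
  let CZ := ((AZ :&: BZ) + dual BX)%VS in
  dual CX = ((dual AX :&: BZ) + dual BX)%VS /\
  dual CZ = ((dual AZ :&: BX) + dual BZ)%VS /\
  (dual CX <= CZ)%VS.
Proof.
have hB' : (dual BZ <= BX)%VS by rewrite -[BX]dualK dualS.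
rewrite /= !dual_cap_add_dual //; split=> //; split=> //.
by apply: addvS => //; apply: capvS.
Qed.
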